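(* Let $i\in\{1,2\}$ and let $(X,e,\mu)$ be an $\mathrm{NP}_i$-digital H-space with $X$ $\mathrm{NP}_i$-irreducible. Then for every $x\in X_e$, the maps $\mu_x$ and $\nu_x$ are isomorphisms $X\to X$.
   Context: A digital image is a finite set $X\subset\mathbb{Z}^n$ with a reflexive symmetric adjacency relation (a finite reflexive graph); continuous maps send adjacent points to adjacent points; an isomorphism is a continuous bijection with continuous inverse. On products, $\mathrm{NP}_u$ declares two tuples adjacent iff coordinates are adjacent in at most $u$ positions and equal elsewhere. An $\mathrm{NP}_i$-homotopy from $f$ to $g:X\to Y$ is an $\mathrm{NP}_i$-continuous $H:X\times[0,m]_{\mathbb{Z}}\to Y$ with $H(\cdot,0)=f$, $H(\cdot,m)=g$; write $f\simeq_i g$. $X$ is $\mathrm{NP}_i$-irreducible if it is not $\mathrm{NP}_i$-homotopy equivalent to a digital image with fewer points. $(f,g)(x)=(f(x),g(x))$; $c_e$ is constant at $e$. An $\mathrm{NP}_i$-digital H-space is $(X,e,\mu)$ with $\mu:X\times X\to X$ $\mathrm{NP}_i$-continuous, $\mu\circ(\mathrm{id}_X,c_e)\simeq_i\mathrm{id}_X$, $\mu\circ(c_e,\mathrm{id}_X)\simeq_i\mathrm{id}_X$ (homotopies need not be pointed). $\mu_x(y)=\mu(x,y)$, $\nu_x(y)=\mu(y,x)$; $X_e$ is the connected component of $e$. *)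

From mathcomp Require Export all_boot.
Set Implicit Arguments. Unset Strict Implicit. Unset Printing Implicit Defensive.

Definition digital_image (X : finType) (a : rel X) : Prop :=
  reflexive a /\ symmetric a.

Definition dcontinuous (X Y : finType) (aX : rel X) (aY : rel Y) (f : X -> Y) : Prop :=
  forall x y, aX x y -> aY (f x) (f y).

Definition NPadj (u : nat) (X Y : finType) (aX : rel X) (aY : rel Y) : rel (X * Y) :=
  fun p q => [&& aX p.1 q.1, aY p.2 q.2 & ((p.1 != q.1) + (p.2 != q.2) <= u)%N].

(* the digital interval [0,m]_Z with c_1 adjacency, as 'I_m.+1 *)
Definition intadj (m : nat) : rel 'I_m.+1 :=
  fun s t => ((s <= t.+1) && (t <= s.+1))%N.

Definition NPhomotopic (i : nat) (X Y : finType) (aX : rel X) (aY : rel Y)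
  (f g : X -> Y) : Prop :=
  exists (m : nat) (H : X * 'I_m.+1 -> Y),
    dcontinuous (NPadj i aX (@intadj m)) aY H /\
    (forall x, H (x, ord0) = f x) /\ (forall x, H (x, ord_max) = g x).

Definition NPhequiv (i : nat) (X Y : finType) (aX : rel X) (aY : rel Y) : Prop :=
  exists (f : X -> Y) (g : Y -> X),
    dcontinuous aX aY f /\ dcontinuous aY aX g /\
    NPhomotopic i aX aX (g \o f) id /\ NPhomotopic i aY aY (f \o g) id.

Definition NPirreducible (i : nat) (X : finType) (aX : rel X) : Prop :=
  forall (Y : finType) (aY : rel Y), digital_image aY -> (#|Y| < #|X|)%N ->
    ~ NPhequiv i aX aY.

Definition NPHspace (i : nat) (X : finType) (aX : rel X) (e : X) (mu : X * X -> X) : Prop :=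
  dcontinuous (NPadj i aX aX) aX mu /\
  NPhomotopic i aX aX (fun x => mu (x, e)) id /\
  NPhomotopic i aX aX (fun x => mu (e, x)) id.

Definition disomorphism (X Y : finType) (aX : rel X) (aY : rel Y) (f : X -> Y) : Prop :=
  exists g : Y -> X, cancel f g /\ cancel g f /\ dcontinuous aX aY f /\ dcontinuous aY aX g.

(* A self-map homotopic to the identity of an irreducible image X is onto: some
   iterate g of it is idempotent and still homotopic to the identity, so g is a
   retraction of X onto its fixed points that is a homotopy equivalence, and
   irreducibility forces that image to be all of X.  A path from e to x moves the
   translation mu(e, -), which is homotopic to the identity, to mu(x, -) through a
   chain of one-step homotopies; hence mu(x, -) is a continuous bijection of X,
   and a continuous bijection of a finite graph is an isomorphism because it
   permutes the finitely many edges.  The right translations are the left ones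
   of mu composed with the swap. *)
From mathcomp Require Import all_boot.
From Stdlib Require Import Relation_Operators Operators_Properties FunctionalExtensionality.
Set Implicit Arguments. Unset Strict Implicit. Unset Printing Implicit Defensive.

Lemma leq_addb_le1 (b : bool) (n i : nat) : (n + 1 <= i)%N -> (n + b <= i)%N.
Proof. by move=> /(leq_trans _); apply; rewrite leq_add2l leq_b1. Qed.

Section OneStepHomotopies.

Variables (i : nat) (X : finType) (a : rel X).

(* The two ends of an NP_i-continuous map X * [0,1]_Z -> X. *)
Definition NPstep (f g : X -> X) : Prop :=
  [/\ dcontinuous a a f, dcontinuous a a g &
      forall x y, a x y -> ((x != y) + 1 <= i)%N -> a (f x) (g y)].

Lemma NPhomotopic_refl (f : X -> X) : dcontinuous a a f -> NPhomotopic i a a f f.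
Proof.
by move=> cf; exists 0, (fun p => f p.1); split=> // [[x s] [y t] /and3P[/= /cf]].
Qed.

Lemma NPhomotopic_NPstep (f g : X -> X) :
  (0 < i)%N -> NPhomotopic i a a f g -> clos_refl_trans _ NPstep f g.
Proof.
move=> i_gt0 [m [H [cH [H0 Hm]]]].
pose h k x := H (x, inord k).
have h_step k : (k < m)%N -> NPstep (h k) (h k.+1).
  move=> lt_km; have le_km := ltnW lt_km.
  split=> [x y axy | x y axy | x y axy xy_i]; apply: cH; rewrite /NPadj /= axy.
  1,2: by rewrite /intadj leqnSn eqxx addn0 (leq_trans (leq_b1 _)).
  by rewrite /intadj !inordK ?ltnS // leqW ?leqnn //= leq_addb_le1.
have h_chain k : (k <= m)%N -> clos_refl_trans _ NPstep (h 0) (h k).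
  elim: k => [|k IH] le_km; first exact: rt_refl.
  exact: rt_trans (IH (ltnW le_km)) (rt_step _ _ _ _ (h_step k le_km)).
have -> : f = h 0.
  by apply: functional_extensionality => x; rewrite -H0 /h; congr H; congr pair;
    apply: val_inj; rewrite /= inordK.
have -> : g = h m.
  by apply: functional_extensionality => x; rewrite -Hm /h; congr H; congr pair;
    apply: val_inj; rewrite /= inordK.
exact: h_chain.
Qed.

Lemma NPhomotopic_cons (f h g : X -> X) :
  symmetric a -> NPstep f h -> NPhomotopic i a a h g -> NPhomotopic i a a f g.
Proof.
move=> sym_a [cf _ fh] [m [H [cH [H0 Hm]]]].
have inord0 : inord 0 = ord0 :> 'I_m.+1 by apply: val_inj; rewrite /= inordK.
pose K (p : X * 'I_m.+2) := if val p.2 is n.+1 then H (p.1, inord n) else f p.1.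
exists m.+1, K; split; last split=> // x; last first.
  by rewrite /K /= -Hm; congr H; congr pair; apply: val_inj; rewrite /= inordK.
move=> [x [[|s] lt_s]] [y [[|t] lt_t]] /and3P[/= axy]; rewrite /K /intadj /=.
- by move=> _ _; apply: cf.
- by rewrite ltnS leqn0 => /eqP -> xy_i; rewrite inord0 H0; apply: fh.
- rewrite ltnS leqn0 andbT => /eqP -> xy_i.
  by rewrite inord0 H0 sym_a; apply: fh; [rewrite sym_a | rewrite eq_sym].
rewrite !ltnS => st xy_i; apply: cH.
have [lt_sm lt_tm] : (s < m.+1)%N /\ (t < m.+1)%N by [].
rewrite /NPadj /= axy /intadj -[inord s == _]val_eqE /= !inordK //.
by rewrite st; exact: xy_i.
Qed.

Lemma rt_NPstep_NPhomotopic (f g : X -> X) :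
  symmetric a -> dcontinuous a a f -> clos_refl_trans _ NPstep f g ->
  NPhomotopic i a a f g.
Proof.
move=> sym_a + /clos_rt_rt1n_iff fg; elim: fg => [f0 | f0 h0 g0 st _ IH] cf.
  exact: NPhomotopic_refl.
by case: (st) => _ ch _; apply: NPhomotopic_cons st (IH ch).
Qed.

Lemma rt_NPstep_comp (F f g : X -> X) :
  dcontinuous a a F -> clos_refl_trans _ NPstep f g ->
  clos_refl_trans _ NPstep (F \o f) (F \o g).
Proof.
move=> cF; elim=> [f0 g0 [cf cg fg] | f0 | f0 g0 h0 _ IH1 _ IH2].
- by apply: rt_step; split=> [x y /cf | x y /cg | x y axy /(fg _ _ axy)] /cF.
- exact: rt_refl.
- exact: rt_trans IH1 IH2.
Qed.

Lemma dcontinuous_iter (f : X -> X) n : dcontinuous a a f -> dcontinuous a a (iter n f).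
Proof. by move=> cf; elim: n => [|n IH] //= x y /IH /cf. Qed.

Lemma rt_NPstep_iter (f : X -> X) n :
  dcontinuous a a f -> clos_refl_trans _ NPstep f id ->
  clos_refl_trans _ NPstep (iter n f) id.
Proof.
move=> cf f_id; elim: n => [|n IH]; first exact: rt_refl.
have -> : iter n.+1 f = f \o iter n f by apply: functional_extensionality.
exact: rt_trans (rt_NPstep_comp cf IH) f_id.
Qed.

End OneStepHomotopies.

Lemma iter_idempotent (T : finType) (f : T -> T) :
  exists2 N, (0 < N)%N & idempotent_fun (iter N f).
Proof.
pose F (k : 'I_#|{ffun T -> T}|.+1) := [ffun x => iter k f x].
have /injectivePn[k1 [k2 ne_k /ffunP eq_F]] : ~~ injectiveb F.
  by apply/injectiveP => /leq_card; rewrite card_ord ltnn.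
have [p [d d_gt0 per]] : exists p, exists2 d, (0 < d)%N & iter (d + p) f =1 iter p f.
  have eq_iter x : iter k1 f x = iter k2 f x by have := eq_F x; rewrite !ffunE.
  case: (ltngtP k1 k2) => [lt_k | lt_k | /val_inj eq_k]; last by rewrite eq_k eqxx in ne_k.
  - by exists k1, (k2 - k1); rewrite ?subn_gt0 // => x; rewrite subnK 1?ltnW.
  - by exists k2, (k1 - k2); rewrite ?subn_gt0 // => x; rewrite subnK 1?ltnW.
have per_mul k : iter (k * d + p) f =1 iter p f.
  by elim: k => [|k IH] x //; rewrite mulSnr -addnA iterD per -iterD IH.
(* A multiple of the period d that exceeds the preperiod p. *)
exists (p.+1 * d); first by rewrite muln_gt0.
have le_p : (p <= p.+1 * d)%N by rewrite (leq_trans (leqnSn p)) ?leq_pmulr.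
move=> x /=; rewrite -iterD -{1}(subnK le_p) -addnA [(p + _)%N]addnC.
by rewrite iterD per_mul -iterD subnK.
Qed.

Lemma NPhequiv_fixpoints (i : nat) (X : finType) (a : rel X) (g : X -> X) :
  idempotent_fun g -> dcontinuous a a g -> NPhomotopic i a a g id ->
  NPhequiv i a [rel u v : {x | g x == x} | a (val u) (val v)].
Proof.
move=> gK cg g_id.
pose r x : {x | g x == x} := exist _ (g x) (introT eqP (gK x)).
exists r, val; split; first by move=> x y /cg.
split=> //; split; first exact: g_id.
have -> : r \o val = id by apply: functional_extensionality => u; apply: val_inj; apply/eqP/(valP u).
exact: NPhomotopic_refl.
Qed.

Lemma onto_bij (T : finType) (f : T -> T) : (forall y, y \in codom f) -> bijective f.
Proof.
move=> onto; apply: injF_bij => x y.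
have /image_injP inj_f : #|codom f| == #|T| by apply/eqP/eq_card => y'; rewrite onto.
exact: inj_f.
Qed.

Lemma NPirreducible_bij (i : nat) (X : finType) (a : rel X) (f : X -> X) :
  (0 < i)%N -> digital_image a -> NPirreducible i a -> dcontinuous a a f ->
  clos_refl_trans _ (NPstep i a) f id -> bijective f.
Proof.
move=> i_gt0 [refl_a sym_a] irr cf f_id; apply: onto_bij => z.
apply/idPn => z_off; have [N N_gt0 gK] := iter_idempotent f; set g := iter N f in gK.
have g_off x : g x != z.
  by apply: contraNneq z_off => <-; rewrite /g -(prednK N_gt0) iterS codom_f.
have cg : dcontinuous a a g by apply: dcontinuous_iter.
apply: (irr _ _ _ _ (NPhequiv_fixpoints gK cg _)).
- by split=> [u | u v] /=; [exact: refl_a | exact: sym_a].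
- rewrite card_sig -(cardC [pred x | g x == x]) -[n in (n < _)%N]addn0 ltn_add2l.
  by apply/card_gt0P; exists z; rewrite !inE g_off.
exact/rt_NPstep_NPhomotopic/rt_NPstep_iter.
Qed.

Lemma continuous_bij_disomorphism (X : finType) (a : rel X) (f : X -> X) :
  dcontinuous a a f -> bijective f -> disomorphism a a f.
Proof.
move=> cf [g fK gK]; exists g; do 3!split=> //; move=> u v auv.
pose edges := [set p : X * X | a p.1 p.2].
pose f2 (p : X * X) := (f p.1, f p.2).
have inj_f2 : injective f2 by move=> [x1 x2] [y1 y2] [/(can_inj fK) -> /(can_inj fK) ->].
have f2_edges : f2 @: edges = edges.
  apply/eqP; rewrite eqEcard (card_imset _ inj_f2) leqnn andbT.
  by apply/subsetP => _ /imsetP[p ep ->]; rewrite !inE in ep *; apply: cf.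
have : (u, v) \in f2 @: edges by rewrite f2_edges inE.
by case/imsetP => [[x y]]; rewrite inE /= => axy [-> ->]; rewrite !fK.
Qed.

Lemma connect_rt (T : finType) (e : rel T) (U : Type) (R : U -> U -> Prop) (F : T -> U) x y :
  (forall u v, e u v -> R (F v) (F u)) -> connect e x y -> clos_refl_trans _ R (F y) (F x).
Proof.
move=> RF /connectP[p + ->]; elim: p x => [|z p IH] x /=; first by move=> _; apply: rt_refl.
by case/andP => exz /IH zy; exact: rt_trans zy (rt_step _ _ _ _ (RF _ _ exz)).
Qed.

Lemma NPstep_mul_left (i : nat) (X : finType) (a : rel X) (mu : X * X -> X) c c' :
  (0 < i)%N -> reflexive a -> dcontinuous (NPadj i a a) a mu -> a c c' ->
  NPstep i a (fun y => mu (c, y)) (fun y => mu (c', y)).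
Proof.
move=> i_gt0 refl_a cmu acc; have le1_i (b : bool) : (b <= i)%N by rewrite (leq_trans (leq_b1 b)).
split=> [y y' ayy' | y y' ayy' | y y' ayy' yy_i]; apply: cmu.
1,2: by rewrite /NPadj /= refl_a ayy' eqxx add0n le1_i.
by rewrite /NPadj /= acc ayy' addnC leq_addb_le1.
Qed.

Lemma NPHspace_left_mul_iso (i : nat) (X : finType) (a : rel X) (e : X) (mu : X * X -> X) :
  (0 < i)%N -> digital_image a -> NPHspace i a e mu -> NPirreducible i a ->
  forall x, connect a e x -> disomorphism a a (fun y => mu (x, y)).
Proof.
move=> i_gt0 [refl_a sym_a] [cmu [_ mu_e]] irr x ex.
have [cmu_x _ _] := NPstep_mul_left i_gt0 refl_a cmu (refl_a x).
apply: continuous_bij_disomorphism cmu_x (NPirreducible_bij _ _ irr cmu_x _) => //.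
have mu_x_e : clos_refl_trans _ (NPstep i a) (fun y => mu (x, y)) (fun y => mu (e, y)).
  by apply: (connect_rt (F := fun c y => mu (c, y))) ex => u v; rewrite sym_a;
    apply: NPstep_mul_left.
exact: rt_trans mu_x_e (NPhomotopic_NPstep i_gt0 mu_e).
Qed.

Lemma NPHspace_swap (i : nat) (X : finType) (a : rel X) (e : X) (mu : X * X -> X) :
  NPHspace i a e mu -> NPHspace i a e (fun p => mu (p.2, p.1)).
Proof.
move=> [cmu [mu_r mu_l]]; split=> // [[x y] [x' y']] /and3P[/= axx' ayy' n_le].
by apply: cmu; rewrite /NPadj /= axx' ayy' addnC.
Qed.

Theorem mainTheorem8 (i : nat) (X : finType) (a : rel X) (e : X) (mu : X * X -> X) :
  (i = 1 \/ i = 2) ->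
  digital_image a ->
  NPHspace i a e mu ->
  NPirreducible i a ->
  forall x : X, connect a e x ->
    disomorphism a a (fun y => mu (x, y)) /\ disomorphism a a (fun y => mu (y, x)).
Proof.
move=> i12 dI hspace irr x ex.
have i_gt0 : (0 < i)%N by case: i12 => ->.
split; first exact: NPHspace_left_mul_iso hspace irr x ex.
exact: NPHspace_left_mul_iso i_gt0 dI (NPHspace_swap hspace) irr x ex.
Qed.
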